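(* For $\beta>-1$, $\alpha\in(0,1)$ and integer $T\ge2$, let $S_T(\alpha,\beta)=\sum_{t=1}^{T-1}\frac{1}{t^{1+\beta}(T-t)^{1+\alpha}}$ and, for $u>0$, $\xi_u=\sum_{k\ge1}k^{-(1+u)}$. Then $$S_T(\alpha,\beta)\le\frac{2^{2+\min(\alpha,\beta)}\,\xi_{\max(\alpha,\beta)}}{T^{1+\min(\alpha,\beta)}}.$$ *)

From Stdlib Require Import Reals.
From Coquelicot Require Import Coquelicot.
Open Scope R_scope.

Definition S_T (T : nat) (alpha beta : R) : R :=
  sum_n_m (fun t : nat =>
    / (Rpower (INR t) (1 + beta) * Rpower (INR (T - t)) (1 + alpha))) 1 (T - 1).

Definition xi (u : R) : R :=
  Series (fun k : nat => / Rpower (INR (k + 1)) (1 + u)).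

From Stdlib Require Import Reals Lra Lia.
From Coquelicot Require Import Coquelicot.
Open Scope R_scope.

(* Write [m = min(alpha, beta)] and [M = max(alpha, beta)].  For [t + s = T]
   the larger of [t], [s] is at least [T/2], and by the rearrangement
   inequality the larger exponent may be moved onto the smaller of the two
   factors, so each term is at most
   [(T/2)^-(1+m) (t^-(1+M) + s^-(1+M))].  Summing over [t], the two sums
   coincide after the reflection [t -> T - t], and each is a partial sum of
   the convergent series [xi_M]. *)

Lemma exp_le_compat (x y : R) : x <= y -> exp x <= exp y.
Proof.
  intros [Hlt | ->]; [now apply Rlt_le, exp_increasing | apply Rle_refl].
Qed.

Lemma ln_le_sub_1 (z : R) : 0 < z -> ln z <= z - 1.
Proof.
  intros Hz. pose proof (exp_ineq1_le (ln z)) as H.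
  rewrite exp_ln in H; lra.
Qed.

(* A discrete form of [d/dA (A^-u) = -u A^-(1+u)]. *)
Lemma inv_Rpower_succ_le (u A : R) : 0 < u -> 0 < A ->
  u * / Rpower (A + 1) (1 + u) <= / Rpower A u - / Rpower (A + 1) u.
Proof.
  intros Hu HA.
  set (B := A + 1).
  assert (HB : 0 < B) by (unfold B; lra).
  assert (HBA : 0 < B / A) by (apply Rdiv_lt_0_compat; lra).
  set (P := Rpower B u).
  set (r := Rpower (B / A) u).
  assert (HP : 0 < P) by apply exp_pos.
  assert (Hr : 0 < r) by apply exp_pos.
  assert (Hsplit : Rpower A u = P / r).
  { assert (HPr : P = Rpower A u * r).
    { unfold P, r. rewrite Rpower_mult_distr by lra. f_equal. field. lra. }
    rewrite HPr. field. lra. }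
  (* [r = exp (u ln (B/A)) >= 1 + u ln (B/A)] and [ln (B/A) >= 1 - A/B = 1/B]. *)
  assert (Hgrow : u / B <= r - 1).
  { assert (Hln : / B <= ln (B / A)).
    { pose proof (ln_le_sub_1 (A / B) ltac:(apply Rdiv_lt_0_compat; lra)) as H.
      replace (B / A) with (/ (A / B)) by (field; split; lra).
      rewrite ln_Rinv by (apply Rdiv_lt_0_compat; lra).
      replace (A / B - 1) with (- / B) in H by (unfold B; field; lra). lra. }
    pose proof (exp_ineq1_le (u * ln (B / A))) as H.
    change (exp (u * ln (B / A))) with r in H.
    assert (u * / B <= u * ln (B / A)) by (apply Rmult_le_compat_l; lra).
    unfold Rdiv. lra. }
  rewrite Hsplit, Rpower_plus, Rpower_1 by lra. fold P.
  replace (u * / (B * P)) with (u / B * / P) by (field; lra).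
  replace (/ (P / r) - / P) with ((r - 1) * / P) by (field; lra).
  apply Rmult_le_compat_r; [apply Rlt_le, Rinv_0_lt_compat |]; assumption.
Qed.

Definition xi_term (u : R) (k : nat) : R := / Rpower (INR (k + 1)) (1 + u).

Lemma xi_term_pos (u : R) (k : nat) : 0 < xi_term u k.
Proof. apply Rinv_0_lt_compat, exp_pos. Qed.

Lemma sum_xi_term_le (u : R) (n : nat) : 0 < u ->
  u * sum_n (xi_term u) n + / Rpower (INR (n + 1)) u <= u + 1.
Proof.
  intros Hu. induction n as [|n IHn].
  - rewrite sum_O. unfold xi_term. simpl.
    unfold Rpower. rewrite ln_1, !Rmult_0_r, exp_0. lra.
  - rewrite sum_Sn.
    assert (Hn : 0 < INR (n + 1)) by (rewrite plus_INR; simpl; pose proof (pos_INR n); lra).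
    assert (HS : INR (S n + 1) = INR (n + 1) + 1) by (rewrite !plus_INR, S_INR; ring).
    pose proof (inv_Rpower_succ_le u (INR (n + 1)) Hu Hn) as Hstep.
    unfold xi_term at 2. rewrite HS. unfold plus; simpl. nra.
Qed.

Lemma ex_series_xi_term (u : R) : 0 < u -> ex_series (xi_term u).
Proof.
  intros Hu.
  assert (Hincr : forall n, sum_n (xi_term u) n <= sum_n (xi_term u) (S n)).
  { intros n. rewrite sum_Sn. unfold plus; simpl.
    pose proof (xi_term_pos u (S n)). lra. }
  assert (Hbound : forall n, sum_n (xi_term u) n <= (u + 1) / u).
  { intros n. pose proof (sum_xi_term_le u n Hu).
    assert (0 < / Rpower (INR (n + 1)) u) by apply Rinv_0_lt_compat, exp_pos.
    apply (Rmult_le_reg_l u); [assumption |].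
    replace (u * ((u + 1) / u)) with (u + 1) by (field; lra). lra. }
  exact (ex_finite_lim_seq_incr _ _ Hincr Hbound).
Qed.

Lemma sum_n_le_Series (a : nat -> R) (n : nat) :
  (forall k, 0 <= a k) -> ex_series a -> sum_n a n <= Series a.
Proof.
  intros Ha Hex.
  apply is_lim_seq_incr_compare; [exact (Series_correct a Hex) |].
  intros k. rewrite sum_Sn. unfold plus; simpl. pose proof (Ha (S k)). lra.
Qed.

Lemma sum_xi_term_le_xi (u : R) (n : nat) : 0 < u -> sum_n (xi_term u) n <= xi u.
Proof.
  intros Hu. apply sum_n_le_Series; [| now apply ex_series_xi_term].
  intros k. apply Rlt_le, xi_term_pos.
Qed.

Lemma rearrangement_le (p q x y : R) : x <= y ->
  Rmax p q * x + Rmin p q * y <= p * x + q * y.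
Proof. intros Hxy. unfold Rmax, Rmin. destruct (Rle_dec p q); nra. Qed.

Lemma Rpower_rearrangement (p q t s : R) : 0 < t <= s ->
  Rpower t (Rmax p q) * Rpower s (Rmin p q) <= Rpower t p * Rpower s q.
Proof.
  intros Hts. unfold Rpower. rewrite <- !exp_plus.
  apply exp_le_compat, rearrangement_le, ln_le; lra.
Qed.

Lemma inv_Rpower_mul_le_sorted (p q t s : R) : 0 <= Rmin p q -> 0 < t <= s ->
  / (Rpower t p * Rpower s q) <=
  / Rpower ((t + s) / 2) (Rmin p q) * / Rpower t (Rmax p q).
Proof.
  intros Hm Hts.
  rewrite <- Rinv_mult.
  apply Rinv_le_contravar; [apply Rmult_lt_0_compat; apply exp_pos |].
  eapply Rle_trans; [| apply Rpower_rearrangement; exact Hts].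
  rewrite Rmult_comm. apply Rmult_le_compat_l; [apply Rlt_le, exp_pos |].
  apply Rle_Rpower_l; lra.
Qed.

Lemma inv_Rpower_mul_le (p q t s : R) : 0 <= Rmin p q -> 0 < t -> 0 < s ->
  / (Rpower t p * Rpower s q) <=
  / Rpower ((t + s) / 2) (Rmin p q) *
    (/ Rpower t (Rmax p q) + / Rpower s (Rmax p q)).
Proof.
  intros Hm Ht Hs.
  assert (Hc : 0 < / Rpower ((t + s) / 2) (Rmin p q)) by apply Rinv_0_lt_compat, exp_pos.
  assert (Hpt : 0 < / Rpower t (Rmax p q)) by apply Rinv_0_lt_compat, exp_pos.
  assert (Hps : 0 < / Rpower s (Rmax p q)) by apply Rinv_0_lt_compat, exp_pos.
  destruct (Rle_dec t s) as [Hts | Hst].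
  - pose proof (inv_Rpower_mul_le_sorted p q t s Hm (conj Ht Hts)). nra.
  - rewrite Rmin_comm in Hm.
    pose proof (inv_Rpower_mul_le_sorted q p s t Hm ltac:(lra)) as H.
    rewrite Rmult_comm, (Rplus_comm s t), Rmin_comm, Rmax_comm in H. nra.
Qed.

Lemma sum_n_le_loc (a b : nat -> R) (n : nat) :
  (forall k, (k <= n)%nat -> a k <= b k) -> sum_n a n <= sum_n b n.
Proof.
  induction n as [|n IHn]; intros Hab.
  - rewrite !sum_O. apply Hab; lia.
  - rewrite !sum_Sn. apply Rplus_le_compat.
    + apply IHn. intros k Hk. apply Hab; lia.
    + apply Hab; lia.
Qed.

Lemma sum_n_reflect (h : nat -> R) (n : nat) :
  sum_n (fun k => h (n - k)%nat) n = sum_n h n.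
Proof.
  revert h. induction n as [|n IHn]; intros h.
  - reflexivity.
  - unfold sum_n in *. rewrite sum_Sn_m, <- sum_n_m_S by lia.
    simpl (S n - _)%nat. rewrite IHn, sum_n_Sm by lia.
    unfold plus; simpl. apply Rplus_comm.
Qed.

Lemma S_T_le (alpha beta : R) (n : nat) : -1 < alpha -> -1 < beta ->
  S_T (S (S n)) alpha beta <=
    2 * / Rpower (INR (S (S n)) / 2) (1 + Rmin alpha beta) *
    sum_n (xi_term (Rmax alpha beta)) n.
Proof.
  intros Ha Hb.
  set (c := / Rpower (INR (S (S n)) / 2) (1 + Rmin alpha beta)).
  set (g := xi_term (Rmax alpha beta)).
  assert (Hterm : forall k, (k <= n)%nat ->
    / (Rpower (INR (S k)) (1 + beta) * Rpower (INR (S (S n) - S k)) (1 + alpha))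
      <= c * (g k + g (n - k)%nat)).
  { intros k Hk.
    replace (S (S n) - S k)%nat with (n - k + 1)%nat by lia.
    rewrite <- Nat.add_1_r.
    assert (Hsum : (INR (k + 1) + INR (n - k + 1)) / 2 = INR (S (S n)) / 2).
    { rewrite <- plus_INR. f_equal. f_equal. lia. }
    unfold c, g, xi_term. rewrite <- Hsum.
    replace (1 + Rmin alpha beta) with (Rmin (1 + beta) (1 + alpha))
      by (rewrite <- Rplus_min_distr_l, Rmin_comm; reflexivity).
    replace (1 + Rmax alpha beta) with (Rmax (1 + beta) (1 + alpha))
      by (rewrite <- Rplus_max_distr_l, Rmax_comm; reflexivity).
    apply inv_Rpower_mul_le.
    - apply Rmin_glb; lra.
    - rewrite plus_INR; simpl; pose proof (pos_INR k); lra.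
    - rewrite plus_INR; simpl; pose proof (pos_INR (n - k)); lra. }
  unfold S_T. replace (S (S n) - 1)%nat with (S n) by lia.
  rewrite <- sum_n_m_S.
  apply Rle_trans with (sum_n (fun k => c * (g k + g (n - k)%nat)) n).
  - apply sum_n_le_loc, Hterm.
  - change (sum_n (fun k => mult c (plus (g k) (g (n - k)%nat))) n
      <= 2 * c * sum_n g n).
    rewrite sum_n_mult_l, sum_n_plus, (sum_n_reflect g).
    replace (2 * c * sum_n g n) with (c * (sum_n g n + sum_n g n)) by ring.
    apply Rle_refl.
Qed.

Lemma inv_Rpower_half (x e : R) : 0 < x ->
  2 * / Rpower (x / 2) e = Rpower 2 (1 + e) / Rpower x e.
Proof.
  intros Hx.
  assert (Hsplit : Rpower x e = Rpower (x / 2) e * Rpower 2 e).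
  { rewrite Rpower_mult_distr by lra. f_equal. field. }
  rewrite Hsplit, Rpower_plus, Rpower_1 by lra.
  field. split; apply Rgt_not_eq, exp_pos.
Qed.

Theorem lemma5 (alpha beta : R) (T : nat) :
  -1 < beta -> 0 < alpha < 1 -> (2 <= T)%nat ->
  S_T T alpha beta <=
    Rpower 2 (2 + Rmin alpha beta) * xi (Rmax alpha beta)
    / Rpower (INR T) (1 + Rmin alpha beta).
Proof.
  intros Hb Ha HT.
  destruct T as [|[|n]]; [lia | lia |].
  assert (HM : 0 < Rmax alpha beta) by (eapply Rlt_le_trans; [| apply Rmax_l]; lra).
  assert (HT2 : 0 < INR (S (S n))) by apply lt_0_INR, Nat.lt_0_succ.
  eapply Rle_trans; [apply S_T_le; lra |].
  replace (2 + Rmin alpha beta) with (1 + (1 + Rmin alpha beta)) by ring.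
  replace (Rpower 2 (1 + (1 + Rmin alpha beta)) * xi (Rmax alpha beta)
             / Rpower (INR (S (S n))) (1 + Rmin alpha beta))
    with (Rpower 2 (1 + (1 + Rmin alpha beta))
            / Rpower (INR (S (S n))) (1 + Rmin alpha beta) * xi (Rmax alpha beta))
    by (unfold Rdiv; ring).
  rewrite <- inv_Rpower_half by exact HT2.
  apply Rmult_le_compat_l.
  - apply Rmult_le_pos; [lra | apply Rlt_le, Rinv_0_lt_compat, exp_pos].
  - now apply sum_xi_term_le_xi.
Qed.
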